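(* Let $(A,\circ_A,\vdash_A,\dashv_A)$ be a Gel'fand–Dorfman dialgebra and $P:A\to A$ a linear map which is a derivation of each of the three multiplications $\circ_A,\vdash_A,\dashv_A$. Define $x\cdot_A y=x\circ_A y+P(x)\vdash_A y-P(y)\dashv_A x$ for all $x,y\in A$. Then $(A,\cdot_A)$ is a Leibniz algebra.
   Context: All vector spaces are over a field $\mathbb K$ of characteristic zero. A Leibniz algebra is a vector space with multiplication $\circ$ satisfying $x\circ(y\circ z)=(x\circ y)\circ z+y\circ(x\circ z)$. A linear map $P$ is a derivation of a multiplication $\ast$ if $P(x\ast y)=P(x)\ast y+x\ast P(y)$. A Novikov dialgebra is $(A,\vdash_A,\dashv_A)$ satisfying for all $x,y,z$: (ND1) $x\vdash_A(y\vdash_A z)=(x\vdash_A y)\vdash_A z-(y\dashv_A x)\vdash_A z+y\vdash_A(x\vdash_A z)$; (ND2) $(y\vdash_A z)\dashv_A x=y\vdash_A(z\dashv_A x)-z\dashv_A(y\vdash_A x)+(z\dashv_A y)\dashv_A x$; (ND3) $z\dashv_A(x\vdash_A y)=z\dashv_A(x\dashv_A y)$; (ND4) $(z\dashv_A y)\dashv_A x=(z\dashv_A x)\dashv_A y$; (ND5) $(y\dashv_A x)\vdash_A z=(y\vdash_A z)\dashv_A x=(y\vdash_A x)\vdash_A z$. A Gel'fand–Dorfman dialgebra is $(A,\circ_A,\vdash_A,\dashv_A)$ such that $(A,\circ_A)$ is a Leibniz algebra, $(A,\vdash_A,\dashv_A)$ is a Novikov dialgebra, and for all $x,y,z$: (GD1)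 $x\vdash_A(y\circ_A z)-(x\vdash_A y)\circ_A z-(x\circ_A y)\vdash_A z-y\circ_A(x\vdash_A z)+(x\circ_A z)\dashv_A y=0$; (GD2) $x\circ_A(y\vdash_A z)-(y\circ_A z)\dashv_A x+(y\dashv_A x)\circ_A z-(x\circ_A y)\vdash_A z-y\vdash_A(x\circ_A z)=0$; (GD3) $x\circ_A(z\dashv_A y)+(y\circ_A z)\dashv_A x-z\dashv_A(x\circ_A y)-y\circ_A(z\dashv_A x)-(x\circ_A z)\dashv_A y=0$. *)

From mathcomp Require Import all_boot all_order all_algebra.
Set Implicit Arguments. Unset Strict Implicit. Unset Printing Implicit Defensive.
Import GRing.Theory.
Local Open Scope ring_scope.

Section Defs.
Variables (K : fieldType) (A : lmodType K).

Definition bilinear_mul (m : A -> A -> A) : Prop :=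
  (forall a x y z, m (a *: x + y) z = a *: m x z + m y z) /\
  (forall a x y z, m x (a *: y + z) = a *: m x y + m x z).

Definition leibniz (m : A -> A -> A) : Prop :=
  forall x y z, m x (m y z) = m (m x y) z + m y (m x z).

Definition leibniz_algebra (m : A -> A -> A) : Prop :=
  bilinear_mul m /\ leibniz m.

Definition is_derivation (P : A -> A) (m : A -> A -> A) : Prop :=
  forall x y, P (m x y) = m (P x) y + m x (P y).

Definition novikov_dialgebra (l r : A -> A -> A) : Prop :=
  bilinear_mul l /\ bilinear_mul r /\
  (forall x y z, l x (l y z) = l (l x y) z - l (r y x) z + l y (l x z)) /\
  (forall x y z, r (l y z) x = l y (r z x) - r z (l y x) + r (r z y) x) /\
  (forall x y z, r z (l x y) = r z (r x y)) /\
  (forall x y z, r (r z y) x = r (r z x) y) /\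
  (forall x y z, l (r y x) z = r (l y z) x /\ r (l y z) x = l (l y x) z).

(* (A, c, l, r) with c = \circ, l = \vdash, r = \dashv *)
Definition GD_dialgebra (c l r : A -> A -> A) : Prop :=
  leibniz_algebra c /\ novikov_dialgebra l r /\
  (forall x y z, l x (c y z) - c (l x y) z - l (c x y) z - c y (l x z)
                 + r (c x z) y = 0) /\
  (forall x y z, c x (l y z) - r (c y z) x + c (r y x) z - l (c x y) z
                 - l y (c x z) = 0) /\
  (forall x y z, c x (r z y) + r (c y z) x - r z (c x y) - c y (r z x)
                 - r (c x z) y = 0).

Definition dot_mul (c l r : A -> A -> A) (P : A -> A) : A -> A -> A :=
  fun x y => c x y + l (P x) y - r (P y) x.

End Defs.

(* The product splits as [x . y = x o y + x * y] with [x * y := P x |- y - P y -| x].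
   The Novikov dialgebra axioms make [*] a Leibniz product, and the Gel'fand-Dorfman
   compatibilities (GD1)-(GD3), evaluated with one argument replaced by its image
   under P, are exactly the mixed identity needed for the sum of two Leibniz
   products to be Leibniz again. *)
From mathcomp Require Import all_boot all_order all_algebra.
Set Implicit Arguments. Unset Strict Implicit. Unset Printing Implicit Defensive.
Import GRing.Theory.
Local Open Scope ring_scope.

(* Identities in an abelian group are decided by reifying both sides as formal
   Z-linear combinations of atoms and comparing coefficients. *)
Inductive zexpr := ZAtom of nat | ZAdd of zexpr & zexpr | ZOpp of zexpr | ZZero.

Fixpoint zeval (V : zmodType) (env : seq V) (e : zexpr) : V :=
  match e with
  | ZAtom n => nth 0 env n
  | ZAdd a b => zeval env a + zeval env b
  | ZOpp a => - zeval env a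
  | ZZero => 0
  end.

Fixpoint add_coefs (a b : seq int) : seq int :=
  match a, b with
  | [::], _ => b
  | _, [::] => a
  | x :: a', y :: b' => (x + y) :: add_coefs a' b'
  end.

Fixpoint zcoefs (e : zexpr) : seq int :=
  match e with
  | ZAtom n => rcons (nseq n 0) 1
  | ZAdd a b => add_coefs (zcoefs a) (zcoefs b)
  | ZOpp a => map -%R (zcoefs a)
  | ZZero => [::]
  end.

Fixpoint eval_coefs (V : zmodType) (env : seq V) (s : seq int) : V :=
  match s with
  | [::] => 0
  | k :: s' => nth 0 env 0 *~ k + eval_coefs (behead env) s'
  end.

Section ZmodNormalization.
Variable V : zmodType.

Lemma eval_add_coefs (a b : seq int) (env : seq V) :
  eval_coefs env (add_coefs a b) = eval_coefs env a + eval_coefs env b.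
Proof.
elim: a b env => [|x a IH] [|y b] env /=; rewrite ?add0r ?addr0 //.
by rewrite IH mulrzDr addrACA.
Qed.

Lemma eval_opp_coefs (a : seq int) (env : seq V) :
  eval_coefs env (map -%R a) = - eval_coefs env a.
Proof.
elim: a env => [|x a IH] env /=; first by rewrite oppr0.
by rewrite IH mulrNz opprD.
Qed.

Lemma eval_atom_coefs n (env : seq V) :
  eval_coefs env (rcons (nseq n 0) 1) = nth 0 env n.
Proof.
elim: n env => [|n IH] env /=; first by rewrite addr0.
by rewrite mulr0z add0r IH nth_behead.
Qed.

Lemma zevalE (env : seq V) e : zeval env e = eval_coefs env (zcoefs e).
Proof.
elim: e => [n|a IHa b IHb|a IHa|] //=.
- by rewrite eval_atom_coefs.
- by rewrite eval_add_coefs IHa IHb.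
- by rewrite eval_opp_coefs IHa.
Qed.

Lemma eval_coefs_eq0 (env : seq V) s :
  all (eq_op^~ 0) s -> eval_coefs env s = 0.
Proof.
elim: s env => [|k s IH] env //= /andP[/eqP -> /IH ->].
by rewrite mulr0z addr0.
Qed.

Lemma zeval_eq (env : seq V) e1 e2 :
  all (eq_op^~ 0) (zcoefs (ZAdd e1 (ZOpp e2))) -> zeval env e1 = zeval env e2.
Proof.
move=> /(eval_coefs_eq0 env); rewrite -zevalE /= => /eqP.
by rewrite subr_eq0 => /eqP.
Qed.

Lemma eqD (u1 v1 u2 v2 : V) : u1 = v1 -> u2 = v2 -> u1 + u2 = v1 + v2.
Proof. by move=> -> ->. Qed.

Lemma eq_from_combination (a b u v : V) : u = v -> a - b = u - v -> a = b.
Proof. by move=> -> /eqP; rewrite subrr subr_eq0 => /eqP. Qed.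

End ZmodNormalization.

Ltac zmem x l :=
  lazymatch l with
  | nil => constr:(false)
  | (x :: _) => constr:(true)
  | (_ :: ?r) => zmem x r
  end.

Ltac zcollect t env :=
  lazymatch t with
  | (?a + ?b)%R => let env := zcollect a env in zcollect b env
  | (- ?a)%R => zcollect a env
  | 0%R => env
  | _ => lazymatch zmem t env with true => env | false => constr:(t :: env) end
  end.

Ltac zindex x l :=
  lazymatch l with
  | (x :: _) => constr:(0%N)
  | (_ :: ?r) => let n := zindex x r in constr:(S n)
  end.

Ltac zreify t env :=
  lazymatch t with
  | (?a + ?b)%R => let ea := zreify a env in let eb := zreify b env in
                   constr:(ZAdd ea eb)
  | (- ?a)%R => let ea := zreify a env in constr:(ZOpp ea)
  | 0%R => constr:(ZZero)
  | _ => let n := zindex t env in constr:(ZAtom n)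
  end.

Ltac zmod_eq :=
  lazymatch goal with
  | |- @eq ?T ?a ?b =>
    let env := zcollect a (@nil T) in
    let env := zcollect b env in
    let ea := zreify a env in
    let eb := zreify b env in
    apply: (@zeval_eq _ env ea eb); vm_compute; reflexivity
  end.

Ltac sum_eqs es :=
  lazymatch es with
  | (?es', ?e) => let s := sum_eqs es' in constr:(eqD s e)
  | _ => es
  end.

(* Closes [a = b] when [a - b] is, up to abelian-group normalization, the
   difference of the two sides of the sum of the given equations. *)
Ltac zmod_combination es :=
  let s := sum_eqs es in apply: (eq_from_combination s); zmod_eq.

Section BilinearMul.
Variables (K : fieldType) (A : lmodType K) (m : A -> A -> A).
Hypothesis m_bilinear : bilinear_mul m.

Lemma bmulDl x y z : m (x + y) z = m x z + m y z.
Proof. by rewrite -[x]scale1r (proj1 m_bilinear) !scale1r. Qed.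

Lemma bmulDr x y z : m x (y + z) = m x y + m x z.
Proof. by rewrite -[y]scale1r (proj2 m_bilinear) !scale1r. Qed.

Lemma bmul0l z : m 0 z = 0.
Proof. by apply: (addrI (m 0 z)); rewrite -bmulDl !addr0. Qed.

Lemma bmul0r z : m z 0 = 0.
Proof. by apply: (addrI (m z 0)); rewrite -bmulDr !addr0. Qed.

Lemma bmulNl x z : m (- x) z = - m x z.
Proof. by apply/eqP; rewrite -addr_eq0 -bmulDl addNr bmul0l. Qed.

Lemma bmulNr x z : m z (- x) = - m z x.
Proof. by apply/eqP; rewrite -addr_eq0 -bmulDr addNr bmul0r. Qed.

End BilinearMul.

Section SumOfLeibniz.
Variables (K : fieldType) (A : lmodType K).

Definition leibniz_compatible (m1 m2 : A -> A -> A) : Prop :=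
  forall x y z, m1 x (m2 y z) + m2 x (m1 y z) =
    m1 (m2 x y) z + m2 (m1 x y) z + m1 y (m2 x z) + m2 y (m1 x z).

Lemma bilinear_mulD (m1 m2 : A -> A -> A) :
  bilinear_mul m1 -> bilinear_mul m2 -> bilinear_mul (fun x y => m1 x y + m2 x y).
Proof.
move=> [m1l m1r] [m2l m2r]; split=> a x y z.
- by rewrite m1l m2l scalerDr; zmod_eq.
- by rewrite m1r m2r scalerDr; zmod_eq.
Qed.

Lemma eq_leibniz_algebra (m1 m2 : A -> A -> A) :
  (forall x y, m1 x y = m2 x y) -> leibniz_algebra m1 -> leibniz_algebra m2.
Proof.
move=> eq12 [[m1l m1r] L1]; split; first by split=> *; rewrite -!eq12 ?m1l ?m1r.
by move=> x y z; rewrite -!eq12 L1.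
Qed.

Lemma leibniz_algebraD (m1 m2 : A -> A -> A) :
  leibniz_algebra m1 -> leibniz_algebra m2 -> leibniz_compatible m1 m2 ->
  leibniz_algebra (fun x y => m1 x y + m2 x y).
Proof.
move=> [b1 L1] [b2 L2] mixed; split; first exact: bilinear_mulD.
move=> x y z.
rewrite (bmulDl b1) (bmulDl b2) !(bmulDr b1) !(bmulDr b2).
by zmod_combination (L1 x y z, L2 x y z, mixed x y z).
Qed.

End SumOfLeibniz.

Section DerivedBracket.
Variables (K : fieldType) (A : lmodType K) (l r : A -> A -> A) (P : {linear A -> A}).
Hypotheses (dl : is_derivation P l) (dr : is_derivation P r).

Definition deriv_bracket : A -> A -> A := fun x y => l (P x) y - r (P y) x.

Lemma bilinear_deriv_bracket : bilinear_mul l -> bilinear_mul r ->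
  bilinear_mul deriv_bracket.
Proof.
move=> [ll lr] [rl rr]; rewrite /deriv_bracket; split=> a x y z.
- by rewrite linearP ll rr scalerDr scalerN; zmod_eq.
- by rewrite linearP lr rl scalerDr scalerN; zmod_eq.
Qed.

Lemma leibniz_deriv_bracket : novikov_dialgebra l r -> leibniz_algebra deriv_bracket.
Proof.
move=> [bl [br [N1 [N2 [N3 [N4 N5]]]]]].
split; first exact: bilinear_deriv_bracket.
move=> x y z; rewrite /deriv_bracket.
rewrite ?(linearD P, linearN P, dl, dr,
          bmulDl bl, bmulDr bl, bmulNl bl, bmulNr bl,
          bmulDl br, bmulDr br, bmulNl br, bmulNr br).
zmod_combination (N4 x y (P (P z)), esym (N2 x (P y) (P z)),
  proj1 (N5 x (P (P y)) z), N1 (P x) (P y) z, N1 (P (P x)) y z,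
  esym (proj1 (N5 (P (P x)) y z)), esym (proj2 (N5 (P (P x)) y z)),
  N2 y (P x) (P z), N1 y (P (P x)) z, esym (proj1 (N5 y (P (P x)) z)),
  N3 (P y) x (P z)).
Qed.

Lemma GD_compatible_deriv_bracket (c : A -> A -> A) :
  GD_dialgebra c l r -> is_derivation P c -> leibniz_compatible c deriv_bracket.
Proof.
move=> [[bc _] [[bl [br _]] [G1 [G2 G3]]]] dc x y z; rewrite /deriv_bracket.
rewrite ?(linearD P, linearN P, dc, dl, dr,
          bmulDl bc, bmulDr bc, bmulNl bc, bmulNr bc,
          bmulDl bl, bmulDr bl, bmulNl bl, bmulNr bl,
          bmulDl br, bmulDr br, bmulNl br, bmulNr br).
zmod_combination (esym (G3 x y (P z)), G2 x (P y) z, G1 (P x) y z).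
Qed.

End DerivedBracket.

Theorem proposition3p12 (K : fieldType) (A : lmodType K)
  (c l r : A -> A -> A) (P : {linear A -> A}) :
  [pchar K] =i pred0 ->
  GD_dialgebra c l r ->
  is_derivation P c -> is_derivation P l -> is_derivation P r ->
  leibniz_algebra (dot_mul c l r P).
Proof.
move=> _ GD dc dl dr.
have [c_leibniz [novikov _]] := GD.
apply: (@eq_leibniz_algebra _ _ (fun x y => c x y + deriv_bracket l r P x y)).
  by move=> x y; rewrite /dot_mul /deriv_bracket; zmod_eq.
apply: leibniz_algebraD => //.
- exact: leibniz_deriv_bracket.
- exact: GD_compatible_deriv_bracket.
Qed.
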